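(* Let $d\geq 0$ and $0<i\leq d+1$ be integers such that $i$ divides $d+1$. Let $\Delta\in\mathcal{C}(i,d)$. Then $f_j(\Delta)\geq f_j(S(i,d))$ for every $j$.
   Context: All simplicial complexes are finite abstract simplicial complexes; $f_j(\Delta)$ denotes the number of $j$-dimensional faces (faces with $j+1$ vertices) of $\Delta$. A set $F$ of vertices is a missing face of $\Delta$ if $F\notin\Delta$ but every proper subset of $F$ is in $\Delta$; its dimension is $|F|-1$. $\mathcal{C}(i,d)$ denotes the family of $d$-dimensional simplicial complexes $\Delta$ with $\tilde H_d(\Delta;\mathbb{Z})\neq 0$ (reduced homology) and with no missing faces of dimension $>i$. For integers $d\geq 0$, $i>0$ let $q\geq 0$ and $1\leq r\leq i$ be the unique integers with $d+1=qi+r$, and let $S(i,d)=\partial\sigma^i*\cdots*\partial\sigma^i*\partial\sigma^r$ (the simplicial join of $q$ copies of $\partial\sigma^i$ and one copy of $\partial\sigma^r$), where $\partial\sigma^k$ denotes the boundary complex of the $k$-simplex (all proper subsets of a $(k+1)$-element vertex set), the factors being on pairwise disjoint vertex sets. $S(i,d)$ is a $d$-dimensional simplicial sphere. *)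

From mathcomp Require Import all_boot all_order all_algebra.
Set Implicit Arguments. Unset Strict Implicit. Unset Printing Implicit Defensive.
Import GRing.Theory Num.Theory.

Definition is_complex (n : nat) (D : {set {set 'I_n}}) : Prop :=
  forall F G : {set 'I_n}, F \in D -> G \subset F -> G \in D.

Definition fnum (T : finType) (j : nat) (D : {set {set T}}) : nat :=
  #|[set F in D | #|F| == j.+1]|.

Definition has_dim (n : nat) (D : {set {set 'I_n}}) (d : nat) : Prop :=
  (exists2 F, F \in D & #|F| = d.+1) /\ (forall F, F \in D -> #|F| <= d.+1).

Definition missing_face (n : nat) (D : {set {set 'I_n}}) (F : {set 'I_n}) : Prop :=
  F \notin D /\ (forall G : {set 'I_n}, G \proper F -> G \in D).

Definition no_missing_above (n : nat) (D : {set {set 'I_n}}) (i : nat) : Prop :=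
  forall F, missing_face D F -> #|F| <= i.+1.

(* Incidence sign [F : G] for G = F \ {w}: (-1)^(number of vertices of F below w),
   w.r.t. the natural order on 'I_n. *)
Definition incid (n : nat) (F G : {set 'I_n}) : int :=
  (-1) ^+ (\sum_(w in F :\: G) #|[set u in F | (u < w)%N]|).

(* Simplicial boundary of an integer d-chain c (supported on the d-faces of D),
   evaluated at a (d-1)-face G (for d = 0, G = set0 and this is the augmentation). *)
Definition boundary_at (n : nat) (D : {set {set 'I_n}}) (d : nat)
    (c : {set 'I_n} -> int) (G : {set 'I_n}) : int :=
  \sum_(F in D | (#|F| == d.+1) && (G \subset F)) incid F G * c F.

(* Reduced top homology \tilde H_d(D; Z) is nonzero: since there are no
   (d+1)-faces, \tilde H_d = ker(\partial_d), so this says there is a nonzero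
   integral d-cycle. *)
Definition top_homology_nonzero (n : nat) (D : {set {set 'I_n}}) (d : nat) : Prop :=
  exists c : {set 'I_n} -> int,
    (exists2 F, (F \in D) && (#|F| == d.+1) & c F != 0) /\
    (forall G : {set 'I_n}, #|G| = d -> boundary_at D d c G = 0).

Definition in_C (n : nat) (i d : nat) (D : {set {set 'I_n}}) : Prop :=
  [/\ is_complex D, has_dim D d, top_homology_nonzero D d & no_missing_above D i].

(* S(i,d): d+1 = q*i + r with 1 <= r <= i, i.e. q = d %/ i, r = d %% i + 1.
   Vertex set 'I_(q*(i+1) + r+1), split into blocks v %/ (i+1) = 0..q;
   blocks 0..q-1 have i+1 vertices, block q has r+1 vertices.
   A set is a face of the join of the boundaries iff it contains no full block. *)
Definition S_q (i d : nat) : nat := d %/ i.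
Definition S_r (i d : nat) : nat := (d %% i).+1.
Definition S_nv (i d : nat) : nat := S_q i d * i.+1 + (S_r i d).+1.

Definition S_block (i d : nat) (k : nat) : {set 'I_(S_nv i d)} :=
  [set v : 'I_(S_nv i d) | v %/ i.+1 == k].

Definition S_cplx (i d : nat) : {set {set 'I_(S_nv i d)}} :=
  [set F : {set 'I_(S_nv i d)} |
     [forall k : 'I_(S_q i d).+1, ~~ (S_block i d k \subset F)]].

From mathcomp Require Import all_boot all_order all_algebra.
From mathcomp Require Import ring zify.
Set Implicit Arguments. Unset Strict Implicit. Unset Printing Implicit Defensive.
Import GRing.Theory Num.Theory.

(* Face numbers are encoded by the f-polynomial fpoly D = sum_(F in D) X^|F|
   and compared coefficientwise ([coef_ge]).  With sp m = (1 + X)^m - X^m,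
   the f-polynomial of the boundary of a simplex on m vertices, the bound is
   join_poly i e = sp (i+1) ^ (e %/ i) * sp (e %% i + 1).

   The support K of a nonzero top cycle is a pseudocycle: every ridge of a
   member of K lies in a second member.  The main inequality
   [fpoly_ge_join_poly] states fpoly D >= join_poly i e for every complex D
   whose faces have at most e vertices and whose missing faces have at most
   i + 1 vertices, carrying a pseudocycle of e-faces.  It is proved by
   induction on e and on the number of faces: a face with at most i + 1
   vertices lying in no member of K is deleted with all faces containing it;
   otherwise a missing face N with k + 1 vertices (1 <= k <= i) is glued to
   links of its facets, which are admissible for e - k, giving
   fpoly D >= sp (k+1) * join_poly i (e - k) >= join_poly i e, the last step
   by an exchange inequality between the sp's.  Finally, when i divides
   d + 1, fpoly S(i, d) = sp (i+1) ^ (q+1) = join_poly i (d + 1). *)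

Section CoefOrder.
Local Open Scope ring_scope.
Implicit Types p q r : {poly int}.

Definition nonneg p := forall j, 0 <= p`_j.
Definition coef_ge p q := nonneg (p - q).

Lemma nonnegD p q : nonneg p -> nonneg q -> nonneg (p + q).
Proof. by move=> hp hq j; rewrite coefD addr_ge0. Qed.

Lemma nonnegM p q : nonneg p -> nonneg q -> nonneg (p * q).
Proof. by move=> hp hq j; rewrite coefM sumr_ge0 // => k _; rewrite mulr_ge0. Qed.

Lemma nonnegXn p n : nonneg p -> nonneg (p ^+ n).
Proof.
move=> hp; elim: n => [|n IHn]; last by rewrite exprS; apply: nonnegM.
by move=> j; rewrite expr0 coef1; case: (j == 0)%N.
Qed.

Lemma nonneg_polyX : nonneg 'X.
Proof. by move=> j; rewrite coefX; case: (j == 1)%N. Qed.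

Lemma nonneg_sum (I : Type) (s : seq I) (P : pred I) (F : I -> {poly int}) :
  (forall x, P x -> nonneg (F x)) -> nonneg (\sum_(x <- s | P x) F x).
Proof.
move=> hF; apply: (big_ind nonneg) => //; last exact: nonnegD.
by move=> j; rewrite coef0.
Qed.

Lemma coef_ge0 p : nonneg p -> coef_ge p 0.
Proof. by rewrite /coef_ge subr0. Qed.

Lemma coef_ge_trans p q r : coef_ge p q -> coef_ge q r -> coef_ge p r.
Proof. by move=> hpq hqr; rewrite /coef_ge -(subrK q p) -addrA; apply: nonnegD. Qed.

Lemma coef_geD p q p' q' : coef_ge p q -> coef_ge p' q' -> coef_ge (p + p') (q + q').
Proof. by move=> h h'; rewrite /coef_ge opprD addrACA; apply: nonnegD. Qed.

Lemma coef_geMl r p q : nonneg r -> coef_ge p q -> coef_ge (r * p) (r * q).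
Proof. by move=> hr h; rewrite /coef_ge -mulrBr; apply: nonnegM. Qed.

Lemma coef_ge_sum (I : Type) (s : seq I) (P : pred I) (F G : I -> {poly int}) :
  (forall x, P x -> coef_ge (F x) (G x)) ->
  coef_ge (\sum_(x <- s | P x) F x) (\sum_(x <- s | P x) G x).
Proof. by move=> h; rewrite /coef_ge -sumrB; apply: nonneg_sum. Qed.

Lemma coef_1Xn n s : ((1 + 'X) ^+ n : {poly int})`_s = 'C(n, s)%:R.
Proof.
have -> : (1 + 'X) ^+ n = \poly_(k < n.+1) 'C(n, k)%:R :> {poly int}.
  by rewrite addrC exprD1n poly_def; apply: eq_bigr => k _; rewrite scaler_nat.
by rewrite coef_poly; case: ltnP => // lt_ns; rewrite bin_small.
Qed.

End CoefOrder.

Section SpherePolynomial.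
Local Open Scope ring_scope.

(* [sphere_poly m] is the f-polynomial (see [fpoly] below) of the boundary of
   a simplex on m vertices, i.e. of the family of proper subsets of an
   m-element set. *)
Definition sphere_poly (m : nat) : {poly int} := (1 + 'X) ^+ m - 'X ^+ m.

Lemma sphere_poly1 : sphere_poly 1 = 1.
Proof. by rewrite /sphere_poly !expr1 addrK. Qed.

(* Splitting the vertex set of the simplex into two parts of sizes m and n. *)
Lemma sphere_polyD m n :
  sphere_poly (m + n) = (1 + 'X) ^+ m * sphere_poly n + 'X ^+ n * sphere_poly m.
Proof. by rewrite /sphere_poly !exprD; ring. Qed.

Lemma nonneg_1Xn n : nonneg ((1 + 'X) ^+ n).
Proof. by move=> j; rewrite coef_1Xn ler0n. Qed.

Lemma nonneg_sphere_poly m : nonneg (sphere_poly m).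
Proof.
elim: m => [|m IHm]; first by move=> j; rewrite /sphere_poly subrr coef0.
rewrite -addn1 sphere_polyD sphere_poly1 mulr1 expr1.
by apply: nonnegD; [apply: nonneg_1Xn | apply: nonnegM nonneg_polyX IHm].
Qed.

(* The exchange inequality behind the induction: for a >= 1,
   sp(a+x) sp(a+y) - sp(a+x+y) sp(a) = (1+X)^a X^a sp(x) sp(y) >= 0. *)
Lemma sphere_poly_exchange a x y :
  coef_ge (sphere_poly (a + x).+1 * sphere_poly (a + y).+1)
          (sphere_poly (a + x + y).+1 * sphere_poly a.+1).
Proof.
rewrite /coef_ge (_ : _ - _ = (1 + 'X) ^+ a.+1 * 'X ^+ a.+1 *
                               (sphere_poly x * sphere_poly y)); last first.
  by rewrite /sphere_poly -!addSn !exprD; ring.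
apply: nonnegM; last by apply: nonnegM; apply: nonneg_sphere_poly.
by apply: nonnegM; [apply: nonneg_1Xn | apply/nonnegXn/nonneg_polyX].
Qed.

(* [join_poly i e] is the f-polynomial of the join of e %/ i boundaries of
   i-simplices and the boundary of an (e %% i)-simplex; for e = d + 1 and i
   dividing e it is the f-polynomial of S(i, d) (see [join_poly_S]). *)
Definition join_poly (i e : nat) : {poly int} :=
  sphere_poly i.+1 ^+ (e %/ i) * sphere_poly (e %% i).+1.

Lemma join_poly_small i s : (s < i)%N -> join_poly i s = sphere_poly s.+1.
Proof. by move=> lt_si; rewrite /join_poly divn_small // modn_small // mul1r. Qed.

Lemma join_polyMD i q s : (0 < i)%N ->
  join_poly i (q * i + s) = sphere_poly i.+1 ^+ q * join_poly i s.
Proof. by move=> i_gt0; rewrite /join_poly divnMDl // modnMDl exprD mulrA. Qed.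

(* The core of [join_poly_step], for e - k = r < i: whether or not r + k
   reaches i, the claim is one instance of the exchange inequality. *)
Lemma join_poly_exchange i r k : (r < i)%N -> (0 < k <= i)%N ->
  coef_ge (sphere_poly k.+1 * sphere_poly r.+1) (join_poly i (r + k)).
Proof.
move=> lt_ri /andP[k_gt0 le_ki].
have [lt_rk_i | le_i_rk] := ltnP (r + k) i.
  rewrite join_poly_small //.
  by have := sphere_poly_exchange 0 k r; rewrite !add0n sphere_poly1 mulr1 addnC.
have i_gt0 : (0 < i)%N by apply: leq_ltn_trans lt_ri.
set e0 := (r + k - i)%N.
have lt_e0i : (e0 < i)%N by rewrite /e0; lia.
have -> : (r + k = 1 * i + e0)%N by rewrite /e0; lia.
rewrite join_polyMD // join_poly_small // expr1.
have := sphere_poly_exchange e0 (i - r) (i - k).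
have -> : (e0 + (i - r) = k)%N by rewrite /e0; lia.
have -> : (e0 + (i - k) = r)%N by rewrite /e0; lia.
by have -> : (k + (i - k) = i)%N by lia.
Qed.

Lemma join_poly_step i e k : (0 < i)%N -> (0 < k <= i)%N -> (k <= e)%N ->
  coef_ge (sphere_poly k.+1 * join_poly i (e - k)) (join_poly i e).
Proof.
move=> i_gt0 hk le_ke.
have Eek := divn_eq (e - k) i; have lt_ri := ltn_pmod (e - k) i_gt0.
rewrite -{2}(subnK le_ke) Eek -addnA !join_polyMD // join_poly_small // mulrCA.
by apply: coef_geMl; [apply/nonnegXn/nonneg_sphere_poly | apply: join_poly_exchange].
Qed.

End SpherePolynomial.

Section FacePolynomial.
Variable T : finType.
Local Open Scope ring_scope.
Implicit Types (Y L : {set {set T}}) (A B G M : {set T}).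

(* The f-polynomial of a family of sets: its j-th coefficient counts the
   members with j elements, i.e. it is f_{j-1} for a simplicial complex. *)
Definition fpoly Y : {poly int} := \sum_(F in Y) 'X^#|F|.

Lemma coef_fpoly Y s : (fpoly Y)`_s = #|[set F in Y | #|F| == s]|%:R.
Proof.
rewrite /fpoly coef_sum (bigID (fun F : {set T} => #|F| == s)) /=.
rewrite [X in _ + X]big1 ?addr0 => [|F /andP[_ /negbTE ns]]; last first.
  by rewrite coefXn eq_sym ns.
rewrite (eq_bigr (fun=> 1)) => [|F /andP[_ /eqP <-]]; last by rewrite coefXn eqxx.
by rewrite sumr_const; congr _%:R; apply: eq_card => F; rewrite inE.
Qed.

Lemma nonneg_fpoly Y : nonneg (fpoly Y).
Proof. by move=> j; rewrite coef_fpoly ler0n. Qed.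

Lemma fpoly_subset Y Y' : Y' \subset Y -> coef_ge (fpoly Y) (fpoly Y').
Proof.
move=> sY'Y j; rewrite coefB !coef_fpoly subr_ge0 ler_nat subset_leq_card //.
by apply/subsetP => F; rewrite !inE => /andP[/(subsetP sY'Y) -> ->].
Qed.

Lemma cardsU_disjoint A B : [disjoint A & B] -> #|A :|: B| = (#|A| + #|B|)%N.
Proof. by move=> dAB; rewrite cardsU (disjoint_setI0 dAB) cards0 subn0. Qed.

Lemma fpoly_join_set A L : (forall B, B \in L -> [disjoint A & B]) ->
  fpoly [set A :|: B | B in L] = 'X^#|A| * fpoly L.
Proof.
move=> dAL; rewrite /fpoly big_imset => [|B B' /dAL dAB /dAL dAB' eqAB].
  by rewrite mulr_sumr; apply: eq_bigr => B /dAL dAB; rewrite cardsU_disjoint // exprD.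
have AK (C : {set T}) : [disjoint A & C] -> (A :|: C) :\: A = C.
  by move=> dAC; rewrite setDUl setDv set0U; apply/setDidPl; rewrite disjoint_sym.
by rewrite -(AK B dAB) -(AK B' dAB') eqAB.
Qed.

Definition with_trace Y M A := [set G in Y | G :&: M == A].

Lemma fpoly_traces Y M : fpoly Y = \sum_(A : {set T}) fpoly (with_trace Y M A).
Proof.
rewrite /fpoly (partition_big (fun G => G :&: M) xpredT) //=.
by apply: eq_bigr => A _; apply: eq_bigl => G; rewrite inE.
Qed.

Lemma sum_proper_subsets M :
  \sum_(A : {set T} | A \proper M) 'X^#|A| = sphere_poly #|M|.
Proof.
have sumsub : \sum_(A : {set T} | A \subset M) 'X^#|A| = (1 + 'X) ^+ #|M| :> {poly int}.
  apply/polyP => s; rewrite coef_1Xn -cards_draws.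
  rewrite (_ : \sum_(A : {set T} | A \subset M) _ = fpoly (powerset M)); last first.
    by apply: eq_bigl => A; rewrite inE.
  by rewrite coef_fpoly; congr _%:R; apply: eq_card => A; rewrite !inE.
rewrite /sphere_poly -sumsub [in RHS](bigD1 M) //= addrC addrK.
by apply: eq_bigl => A; rewrite properEneq andbC.
Qed.

Lemma fpoly_join_ge Y M c :
  (forall A, A \proper M -> exists2 L, coef_ge (fpoly L) c &
      forall B, B \in L -> [disjoint B & M] /\ A :|: B \in Y) ->
  coef_ge (fpoly Y) (sphere_poly #|M| * c).
Proof.
move=> hM; rewrite (fpoly_traces Y M) (bigID (fun A : {set T} => A \proper M)) /=.
rewrite -sum_proper_subsets mulr_suml -[X in coef_ge _ X]addr0.
apply: coef_geD; last by apply/coef_ge0/nonneg_sum => A _; apply: nonneg_fpoly.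
apply: coef_ge_sum => A ltAM; have [L geLc hL] := hM A ltAM.
have dAL B : B \in L -> [disjoint A & B].
  by case/hL => dBM _; rewrite disjoint_sym (disjointWr (proper_sub ltAM)).
have sub : [set A :|: B | B in L] \subset with_trace Y M A.
  apply/subsetP => _ /imsetP[B LB ->]; have [dBM YAB] := hL B LB.
  by rewrite inE YAB setIUl (setIidPl (proper_sub ltAM)) (disjoint_setI0 dBM) setU0 /=.
apply: coef_ge_trans (fpoly_subset sub) _.
rewrite fpoly_join_set //; apply: coef_geMl geLc.
exact/nonnegXn/nonneg_polyX.
Qed.

Lemma fpoly_join_eq Y M L :
  (forall G, G \in Y -> ~~ (M \subset G)) ->
  (forall B, B \in L -> [disjoint B & M]) ->
  (forall A, A \proper M -> with_trace Y M A = [set A :|: B | B in L]) ->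
  fpoly Y = sphere_poly #|M| * fpoly L.
Proof.
move=> hY dLM hL; rewrite (fpoly_traces Y M) (bigID (fun A : {set T} => A \proper M)) /=.
rewrite -sum_proper_subsets mulr_suml [X in _ + X]big1 ?addr0 => [|A ltAM].
  apply: eq_bigr => A ltAM; rewrite hL // fpoly_join_set // => B /dLM dBM.
  by rewrite disjoint_sym (disjointWr (proper_sub ltAM)).
rewrite /fpoly big1 // => G; rewrite inE => /andP[YG /eqP trG].
by move: ltAM (hY G YG); rewrite -trG properEneq subsetIr andbT negbK => /eqP/setIidPr ->.
Qed.

End FacePolynomial.

Section Complexes.
Variable T : finType.
Implicit Types (D K : {set {set T}}) (A B F G H N U : {set T}).

Definition simplicial D := forall F G, F \in D -> G \subset F -> G \in D.

Definition dim_le e D := forall F, F \in D -> #|F| <= e.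

Definition missing D N := N \notin D /\ forall G, G \proper N -> G \in D.

Definition missing_le i D := forall N, missing D N -> #|N| <= i.+1.

(* The support of a nonzero top-dimensional cycle has this property. *)
Definition pseudocycle e D K :=
  [/\ K \subset D, forall F, F \in K -> #|F| = e, K != set0 &
      forall F x, F \in K -> x \in F ->
        exists2 F', F' \in K & (F' != F) && (F :\ x \subset F')].

Definition admissible i e D K :=
  [/\ simplicial D, dim_le e D, missing_le i D & pseudocycle e D K].

Definition link A D := [set B in D | [disjoint B & A] && (B :|: A \in D)].
Definition link_cycle A K := [set F :\: A | F in K & A \subset F].

Lemma setDU_sub A F : A \subset F -> (F :\: A) :|: A = F.
Proof. by move=> sAF; rewrite setUC -{2}(setID F A) (setIidPr sAF). Qed.

Lemma exists_missing D U : U \notin D -> exists2 N : {set T}, N \subset U & missing D N.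
Proof.
move=> nDU; have [N minN sNU] := minset_exists (P := [pred N : {set T} | N \notin D]) nDU.
have /minsetP[/= nDN minP] := minN; exists N => //; split=> [//|G ltGN].
case: (boolP (G \in D)) => // nDG.
have eqGN := minP G nDG (proper_sub ltGN).
by rewrite eqGN properxx in ltGN.
Qed.

Lemma link_simplicial A D : simplicial D -> simplicial (link A D).
Proof.
move=> simD F G; rewrite !inE => /and3P[DF dFA DFA] sGF.
by rewrite (simD F G DF sGF) (disjointWl sGF dFA) (simD _ _ DFA (setSU _ sGF)).
Qed.

Lemma link_dim e A D : dim_le e D -> dim_le (e - #|A|) (link A D).
Proof.
move=> dimD B; rewrite inE => /and3P[_ dBA DBA].
by have := dimD _ DBA; rewrite cardsU_disjoint //; lia.
Qed.

(* Links do not create large missing faces: a missing face N of the link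
   (disjoint from A) is contained in a missing face of D inside N :|: A. *)
Lemma link_missing i A D : simplicial D -> missing_le i D -> missing_le i (link A D).
Proof.
move=> simD missD N [nlinkN minN].
have [dNA | ndNA] := boolP [disjoint N & A]; last first.
  move: ndNA; rewrite -setI_eq0 => /set0Pn[a]; rewrite inE => /andP[aN aA].
  case: (leqP #|N| 1) => [le1N | lt1N]; first exact: leq_trans le1N _.
  have : [set a] \in link A D by apply: minN; rewrite properEcard sub1set aN cards1.
  by rewrite inE => /and3P[_ /disjointFr/(_ (set11 a))]; rewrite aA.
have nDNA : N :|: A \notin D.
  by apply: contra nlinkN => DNA; rewrite inE dNA DNA (simD _ _ DNA (subsetUl _ _)).
have [N' sN'NA missN'] := exists_missing nDNA.
apply: leq_trans (subset_leq_card _) (missD N' missN').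
apply/subsetP => z zN; apply: contraNT missN'.1 => zN'.
have : N :\ z \in link A D by apply: minN; rewrite properD1.
rewrite inE => /and3P[_ _ DNzA]; apply: simD DNzA _.
apply/subsetP => v vN'; rewrite !inE; have := subsetP sN'NA v vN'.
rewrite inE => /orP[vN | ->]; last by rewrite orbT.
by rewrite vN andbT (contraNneq _ zN') // => <-.
Qed.

Lemma link_pseudocycle e A D K : simplicial D -> pseudocycle e D K ->
  (exists2 F, F \in K & A \subset F) ->
  pseudocycle (e - #|A|) (link A D) (link_cycle A K).
Proof.
move=> simD [sKD cardK nK0 ridgeK] [F0 KF0 sAF0].
have DK F : F \in K -> F \in D by apply: (subsetP sKD).
split.
- apply/subsetP => _ /imsetP[F /[!inE] /andP[KF sAF] ->].
  rewrite setDU_sub // DK // (simD _ _ (DK F KF) (subsetDl _ _)) andbT /=.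
  by apply/setDidPl; rewrite setDDl setUid.
- move=> _ /imsetP[F /[!inE] /andP[KF sAF] ->].
  by rewrite cardsD (setIidPr sAF) cardK.
- by apply/set0Pn; exists (F0 :\: A); apply/imsetP; exists F0; rewrite ?inE ?KF0.
- move=> _ x /imsetP[F /[!inE] /andP[KF sAF] ->] /setDP[xF xA].
  have [F' KF' /andP[F'F sFxF']] := ridgeK F x KF xF.
  have sAF' : A \subset F'.
    apply: subset_trans sFxF'; apply/subsetP => v vA.
    by rewrite !inE (subsetP sAF _ vA) andbT; apply: contraNneq xA => <-.
  exists (F' :\: A); first by apply/imsetP; exists F'; rewrite ?inE ?KF' ?sAF'.
  apply/andP; split; last by rewrite setDDl setUC -setDDl setSD.
  by apply: contra F'F => /eqP eqF'F; rewrite -(setDU_sub sAF') eqF'F setDU_sub.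
Qed.

Lemma admissible_link i e A D K : admissible i e D K ->
  (exists2 F, F \in K & A \subset F) ->
  admissible i (e - #|A|) (link A D) (link_cycle A K).
Proof.
move=> [simD dimD missD cycK] hA; split.
- exact: link_simplicial.
- exact: link_dim.
- exact: link_missing.
- exact: link_pseudocycle.
Qed.

(* Deleting the faces containing a small set G that lies in no member of K
   keeps admissibility: the only new missing face is G itself. *)
Lemma admissible_delete i e D K G : admissible i e D K -> #|G| <= i.+1 ->
  (forall F, F \in K -> ~~ (G \subset F)) ->
  admissible i e [set H in D | ~~ (G \subset H)] K.
Proof.
move=> [simD dimD missD [sKD cardK nK0 ridgeK]] smallG freeG.
have sD'D : [set H in D | ~~ (G \subset H)] \subset D.
  by apply/subsetP => H; rewrite inE => /andP[].
split.
- move=> H H'; rewrite !inE => /andP[DH nGH] sH'H.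
  by rewrite (simD _ _ DH sH'H); apply: contra nGH => /subset_trans; apply.
- by move=> H /(subsetP sD'D)/dimD.
- move=> N [nD'N minN]; case: (boolP (N \in D)) => DN; last first.
    by apply: missD; split => // H /minN/(subsetP sD'D).
  have sGN : G \subset N by move: nD'N; rewrite inE DN negbK.
  have [<- // | ltGN] := eqVproper sGN.
  by have := minN G ltGN; rewrite inE subxx andbF.
- split => //; apply/subsetP => F KF; by rewrite inE (subsetP sKD _ KF) freeG.
Qed.

(* If D has a pseudocycle of positive dimension then D is not a simplex: two
   distinct members of K span a non-face, containing a missing face of size
   at least two. *)
Lemma pseudocycle_missing e D K : simplicial D -> dim_le e D ->
  pseudocycle e D K -> 0 < e -> exists2 N, missing D N & 1 < #|N|.
Proof.
move=> simD dimD [sKD cardK /set0Pn[F0 KF0] ridgeK] e_gt0.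
have [x xF0] : exists x, x \in F0 by apply/set0Pn; rewrite -card_gt0 cardK.
have [F1 KF1 /andP[F1F0 _]] := ridgeK F0 x KF0 xF0.
have nDU : F0 :|: F1 \notin D.
  apply: contra F1F0 => DU.
  have eqU F : F \in K -> F \subset F0 :|: F1 -> F = F0 :|: F1.
    by move=> KF sFU; apply/eqP; rewrite eqEcard sFU (cardK F KF) dimD.
  by rewrite (eqU F1 KF1 (subsetUr _ _)) -(eqU F0 KF0 (subsetUl _ _)).
have [N sNU missN] := exists_missing nDU; exists N => //.
rewrite ltnNge; apply: contra missN.1 => le1N.
have [sNF | sNF] : N \subset F0 \/ N \subset F1.
  case: (set_0Vmem N) => [-> | [v vN]]; first by left; apply: sub0set.
  have -> : N = [set v] by apply/eqP; rewrite eq_sym eqEcard sub1set vN cards1.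
  by move: (subsetP sNU v vN); rewrite !sub1set inE => /orP[]; [left | right].
- exact: simD (subsetP sKD _ KF0) sNF.
- exact: simD (subsetP sKD _ KF1) sNF.
Qed.

Lemma link_join D N y A : simplicial D -> missing D N -> y \in N ->
  A \subset N -> y \notin A ->
  forall B, B \in link (N :\ y) D -> [disjoint B & N] /\ A :|: B \in D.
Proof.
move=> simD [nDN _] yN sAN yA B; rewrite inE => /and3P[_ dBNy DBNy].
have yB : y \notin B.
  apply: contra nDN => yB; apply: simD DBNy _; apply/subsetP => v vN; rewrite !inE.
  by case: (eqVneq v y) => [-> | nvy]; rewrite ?yB ?vN ?nvy ?orbT.
split.
  rewrite -setI_eq0; apply/eqP/setP => v; rewrite !inE.
  have [-> | nvy] := eqVneq v y; first by rewrite (negbTE yB).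
  case vB: (v \in B) => //=.
  by move: (disjointFr dBNy vB); rewrite !inE nvy.
by apply: simD DBNy _; rewrite setUC setUS // subsetD1 sAN yA.
Qed.

End Complexes.

Section MainInequality.
Variable T : finType.
Implicit Types (D K : {set {set T}}).

(* The inductive step when every face with at most i + 1 vertices lies in a
   member of K: a missing face N with k + 1 vertices (1 <= k <= i) gives
   fpoly D >= sp(k+1) * join_poly i (e - k) >= join_poly i e, the first
   inequality by gluing each proper subset of N to the link of an
   (N :\ y), which is admissible for e - k. *)
Lemma fpoly_ge_covered i e D K : 0 < i -> 0 < e -> admissible i e D K ->
  (forall G, G \in D -> #|G| <= i.+1 -> exists2 F, F \in K & G \subset F) ->
  (forall e' D' K', e' < e -> admissible i e' D' K' ->
     coef_ge (fpoly D') (join_poly i e')) ->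
  coef_ge (fpoly D) (join_poly i e).
Proof.
move=> i_gt0 e_gt0 adm covered IHe; have [simD dimD missD cycK] := adm.
have [N missN lt1N] := pseudocycle_missing simD dimD cycK e_gt0.
set k := #|N|.-1; have Nk : #|N| = k.+1 by rewrite prednK // ltnW.
have hk : 0 < k <= i by have := missD N missN; rewrite Nk in lt1N *; lia.
have [k_gt0 le_ki] := andP hk.
have DNy y : y \in N -> N :\ y \in D by move=> yN; apply: missN.2; rewrite properD1.
have cardNy y : y \in N -> #|N :\ y| = k.
  by move=> yN; apply/eqP; rewrite -eqSS -Nk (cardsD1 y N) yN.
have [y0 y0N] : exists y0, y0 \in N by apply/set0Pn; rewrite -card_gt0 ltnW.
have le_ke : k <= e by rewrite -(cardNy y0 y0N) dimD ?DNy.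
apply: (coef_ge_trans _ (join_poly_step i_gt0 hk le_ke)).
rewrite -Nk; apply: fpoly_join_ge => A ltAN.
have [sAN [y yN yA]] := properP ltAN.
exists (link (N :\ y) D); last exact: link_join.
rewrite -(cardNy y yN); apply: IHe; first by rewrite cardNy //; lia.
apply: admissible_link adm _; apply: covered; rewrite ?DNy // cardNy //.
exact: leqW.
Qed.

Lemma fpoly_ge_join_poly i e D K : 0 < i -> admissible i e D K ->
  coef_ge (fpoly D) (join_poly i e).
Proof.
move=> i_gt0; elim/ltn_ind: e D K => e IHe D K.
have [n] := ubnP #|D|; elim: n D K => // n IHn D K /ltnSE-leDn adm.
case: (boolP [exists G in D, (#|G| <= i.+1) && [forall F in K, ~~ (G \subset F)]]).
  (* A small face G in no member of K: delete all faces containing G. *)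
  case/existsP => G /and3P[DG smallG /forallP freeG].
  have adm' := admissible_delete adm smallG (fun F => implyP (freeG F)).
  have ltD'D : [set H in D | ~~ (G \subset H)] \proper D.
    apply/properP; split; first by apply/subsetP => H /[!inE] /andP[].
    by exists G; rewrite ?inE ?subxx ?andbF.
  apply: coef_ge_trans (fpoly_subset (proper_sub ltD'D)) _.
  exact: IHn (leq_trans (proper_card ltD'D) leDn) adm'.
move=> /existsPn noFree; have [simD _ _ [sKD _ /set0Pn[F0 KF0] _]] := adm.
have [-> | e_gt0] := posnP e.
  (* e = 0: the bound is 1, accounted for by the empty face. *)
  rewrite join_poly_small // sphere_poly1.
  have D0 : [set set0] \subset D by rewrite sub1set (simD F0) ?sub0set ?(subsetP sKD).
  apply: coef_ge_trans (fpoly_subset D0) _.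
  by rewrite /fpoly big_set1 cards0 expr0 /coef_ge subrr => j; rewrite coef0.
apply: fpoly_ge_covered i_gt0 e_gt0 adm _ (fun e' D' K' lt_e'e => IHe e' lt_e'e D' K').
move=> G DG smallG; move: (noFree G); rewrite DG smallG /=.
by case/forallPn => F; rewrite negb_imply negbK => /andP[KF sGF]; exists F.
Qed.

End MainInequality.

Section JoinOfSimplexBoundaries.
Variables i d : nat.
Hypotheses (i_gt0 : 0 < i) (i_dvd : i %| d.+1).
Local Notation n := (S_nv i d).
Local Notation q := (S_q i d).
Local Notation block := (S_block i d).

Lemma S_d_dvd : d = q * i + i.-1.
Proof.
have [m Em] := dvdnP i_dvd; have m_gt0 : 0 < m by case: m Em.
have Ed : d = m.-1 * i + i.-1 by apply/eqP; rewrite -eqSS Em; nia.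
by rewrite /S_q {2}Ed divnMDl // divn_small ?addn0 // ltn_predL.
Qed.

Lemma S_r_dvd : S_r i d = i.
Proof. by rewrite /S_r {1}S_d_dvd modnMDl modn_small ?prednK // ltn_predL. Qed.

Lemma S_dvd : d.+1 = q.+1 * i.
Proof. by rewrite {1}S_d_dvd -addnS prednK // mulSnr. Qed.

Lemma S_nv_dvd : n = q.+1 * i.+1.
Proof. by rewrite /S_nv S_r_dvd mulSnr. Qed.

Lemma card_block p : p < q.+1 -> #|block p| = i.+1.
Proof.
move=> lt_pq.
have lt_n (r : 'I_i.+1) : p * i.+1 + r < n.
  by rewrite S_nv_dvd; have := ltn_ord r; nia.
pose g (r : 'I_i.+1) : 'I_n := Ordinal (lt_n r).
have g_inj : injective g by move=> r r' /(congr1 val) /addnI /val_inj.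
have -> : block p = g @: setT.
  apply/setP => v; rewrite !inE; apply/eqP/imsetP => [vp | [r _ ->]].
    exists (Ordinal (ltn_pmod v (ltn0Sn i))) => //.
    by apply: val_inj; rewrite /= {1}(divn_eq v i.+1) vp.
  by rewrite /= divnMDl // divn_small ?addn0.
by rewrite card_imset // cardsT card_ord.
Qed.

Lemma disjoint_blocks k p : k != p -> [disjoint block k & block p].
Proof.
move=> nkp; rewrite -setI_eq0; apply/eqP/setP => v; rewrite !inE.
by apply/negP => /andP[/eqP-> /eqP ekp]; rewrite ekp eqxx in nkp.
Qed.

Definition first_blocks p : {set 'I_n} := [set v : 'I_n | v %/ i.+1 < p].
Definition block_join p : {set {set 'I_n}} :=
  [set F : {set 'I_n} |
     (F \subset first_blocks p) && [forall k : 'I_p, ~~ (block k \subset F)]].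

Lemma no_full_blockP p (F : {set 'I_n}) :
  reflect (forall k, k < p -> ~~ (block k \subset F))
          [forall k : 'I_p, ~~ (block k \subset F)].
Proof.
by apply: (iffP forallP) => [h k lt_kp | h k]; [apply: (h (Ordinal lt_kp)) | apply: h].
Qed.

Lemma first_blocksS p : first_blocks p.+1 = first_blocks p :|: block p.
Proof. by apply/setP => v; rewrite !inE ltnS leq_eqVlt orbC. Qed.

Lemma disjoint_first_blocks p : [disjoint first_blocks p & block p].
Proof.
rewrite -setI_eq0; apply/eqP/setP => v; rewrite !inE.
by apply/negP => /andP[lt_vp /eqP evp]; rewrite evp ltnn in lt_vp.
Qed.

Lemma block_join0 : block_join 0 = [set set0].
Proof.
apply/setP => F; rewrite !inE; apply/andP/eqP => [[sFW _] | ->]; last first.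
  by split; [apply: sub0set | apply/no_full_blockP].
by apply/eqP; rewrite -subset0; apply: subset_trans sFW _; apply/subsetP => v; rewrite inE.
Qed.

Lemma block_join_trace p (A : {set 'I_n}) : A \proper block p ->
  with_trace (block_join p.+1) (block p) A = [set A :|: B | B in block_join p].
Proof.
move=> ltAp; have sAp := proper_sub ltAp.
apply/setP => G; rewrite inE; apply/andP/imsetP.
  rewrite !inE first_blocksS => -[/andP[sGWp /no_full_blockP fullG] /eqP trG].
  exists (G :\: block p); last by rewrite -trG setID.
  rewrite inE; apply/andP; split.
    by rewrite subDset setUC.
  apply/no_full_blockP => k lt_kp; apply: contra (fullG k (ltnW lt_kp)).
  by move/subset_trans; apply; apply: subsetDl.
case=> B /[!inE] /andP[sBW /no_full_blockP fullB] ->.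
have dBp : [disjoint B & block p] := disjointWl sBW (disjoint_first_blocks p).
split; last first.
  by rewrite setIUl (setIidPl sAp) (disjoint_setI0 dBp) setU0.
rewrite first_blocksS setUC setUSS //=.
apply/no_full_blockP => k; rewrite ltnS leq_eqVlt => /orP[/eqP-> | lt_kp].
  apply: contra (proper_subn ltAp) => spAB; apply/subsetP => v vp.
  have /setUP[vB | //] := subsetP spAB v vp.
  by rewrite (disjointFr dBp vB) in vp.
apply: contra (fullB k lt_kp) => skAB; apply/subsetP => v vk.
have /setUP[// | vA] := subsetP skAB v vk.
have dkp : [disjoint block k & block p] by apply: disjoint_blocks; rewrite ltn_eqF.
by move: (subsetP sAp v vA); rewrite (disjointFr dkp vk).
Qed.

Lemma fpoly_block_join p : p <= q.+1 ->
  fpoly (block_join p) = (sphere_poly i.+1 ^+ p)%R.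
Proof.
elim: p => [_ | p IHp lt_pq].
  by rewrite block_join0 /fpoly big_set1 cards0 !expr0.
rewrite exprS -IHp -?(card_block lt_pq); last exact: ltnW.
apply: fpoly_join_eq => [G | B | A]; last exact: block_join_trace.
- by rewrite inE => /andP[_ /no_full_blockP/(_ p (ltnSn p))].
- by rewrite inE => /andP[sBW _]; apply: disjointWl sBW (disjoint_first_blocks p).
Qed.

Lemma fpoly_S_cplx : fpoly (S_cplx i d) = (sphere_poly i.+1 ^+ q.+1)%R.
Proof.
rewrite -fpoly_block_join; last exact: leqnn.
congr fpoly; apply/setP => F; rewrite !inE.
suff -> : F \subset first_blocks q.+1 by [].
by apply/subsetP => v _; rewrite inE ltn_divLR // -S_nv_dvd.
Qed.

Lemma join_poly_S : join_poly i d.+1 = (sphere_poly i.+1 ^+ q.+1)%R.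
Proof. by rewrite /join_poly S_dvd mulnK // modnMl sphere_poly1 mulr1. Qed.

End JoinOfSimplexBoundaries.

(* The support of a nonzero integral d-cycle is a pseudocycle: if a d-face F
   of the support were the only one containing the ridge F :\ x, the boundary
   at F :\ x would be the nonzero term incid F (F :\ x) * c F. *)
Lemma cycle_support_pseudocycle n (D : {set {set 'I_n}}) d (c : {set 'I_n} -> int) :
  (exists2 F, (F \in D) && (#|F| == d.+1) & c F != 0) ->
  (forall G : {set 'I_n}, #|G| = d -> boundary_at D d c G = 0) ->
  pseudocycle d.+1 D [set F in D | (#|F| == d.+1) && (c F != 0)].
Proof.
move=> [F1 /andP[DF1 cardF1] nzF1] cyc; split.
- by apply/subsetP => F; rewrite inE => /andP[].
- by move=> F; rewrite inE => /and3P[_ /eqP].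
- by apply/set0Pn; exists F1; rewrite inE DF1 cardF1.
move=> F x; rewrite inE => /and3P[DF cardF nzF] xF.
have cardFx : #|F :\ x| = d.
  by apply/eqP; rewrite -eqSS -(eqP cardF) (cardsD1 x F) xF.
apply/exists_inP/negbNE/negP => /exists_inPn alone.
have := cyc _ cardFx; rewrite /boundary_at (bigD1 F) /=; last first.
  by rewrite DF cardF subD1set.
rewrite big1 ?addr0 => [|F' /andP[/and3P[DF' cardF' sF'] nF'F]]; last first.
  have [-> | nzF'] := eqVneq (c F') 0; first by rewrite mulr0.
  by have := alone F'; rewrite inE DF' cardF' nzF' nF'F sF' => /(_ isT).
move/eqP; rewrite mulf_eq0 (negbTE nzF) orbF /incid expf_eq0 oppr_eq0 oner_eq0.
by rewrite andbF.
Qed.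

Theorem theorem1p1 (d i n : nat) (D : {set {set 'I_n}}) :
  0 < i -> i <= d.+1 -> i %| d.+1 ->
  in_C i d D ->
  forall j : nat, fnum j (S_cplx i d) <= fnum j D.
Proof.
move=> i_gt0 _ i_dvd [simD [_ dimD] [c [nzc cyc]] missD] j.
have adm : admissible i d.+1 D [set F in D | (#|F| == d.+1) && (c F != 0)].
  by split=> //; apply: cycle_support_pseudocycle.
have := fpoly_ge_join_poly i_gt0 adm j.+1.
by rewrite join_poly_S // -fpoly_S_cplx // coefB !coef_fpoly subr_ge0 ler_nat.
Qed.
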